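(* Consider a radial three-phase grid with $n$ buses $b_1,\dots,b_n$ and $m$ lines, in which a subset of buses (indexed by $\mathcal{M}_b$) is monitored, a monitored bus $b_i$ providing its three phase-to-ground voltage phasors $\dot{\mathbf{V}}^{abc}_i$ and its three injected current phasors $\dot{\mathbf{I}}^{abc}_i$, and the buses indexed by $\mathcal{N}_b=\{1,\dots,n\}\setminus\mathcal{M}_b$ being non-monitored. Suppose that for every $i=1,2,\ldots,n$: (a) if $\rho(b_i)>1$, then $b_i$ has at most one adjacent non-monitored bus; (b) if $\rho(b_i)=1$ and $b_i$ is non-monitored, then $b_i$ is adjacent to a monitored bus. Then the grid is observable.
   Context: A radial grid is a grid whose underlying graph (buses as vertices, lines as edges) is a tree; $\rho(b_i)$ denotes the degree of bus $b_i$, i.e. the number of buses connected to $b_i$ by a line. Each bus $b_i$ has three-phase voltage $\dot{\mathbf{V}}^{abc}_i\in\mathbb{C}^3$. Each line between $b_i$ and $b_j$ is modeled by a known invertible $3\times 3$ complex series admittance matrix $Y_{ij}$ (and possibly known shunt admittance matrices), so that the injected current at bus $b_i$ is $\dot{\mathbf{I}}^{abc}_i=\sum_{j \text{ adjacent to } i} Y_{ij}(\dot{\mathbf{V}}^{abc}_i-\dot{\mathbf{V}}^{abc}_j)+Y^{sh}_i\dot{\mathbf{V}}^{abc}_i$; equivalently $\dot{\mathbf I}=Y\dot{\mathbf V}$ with $Y$ the known network admittance matrix. The state is $x\in\mathbb{R}^{6n}$, the stacked real and imaginary parts of all bus voltages; the (noise-free) measurement vector $z=Hx\in\mathbb{R}^{12d}$,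 $d=|\mathcal{M}_b|$, stacks the real and imaginary parts of $\dot{\mathbf{V}}^{abc}_i$ and $\dot{\mathbf{I}}^{abc}_i$ for $i\in\mathcal{M}_b$. The grid is called observable if, in this noise-free setting, the voltages at all buses are uniquely determined by the measurements, i.e. $Hx=Hx'$ implies $x=x'$. *)

From HB Require Import structures.
From mathcomp Require Import all_boot all_order all_algebra.
From mathcomp Require Import complex.
Set Implicit Arguments. Unset Strict Implicit. Unset Printing Implicit Defensive.
Import Order.TTheory GRing.Theory Num.Theory.
Local Open Scope ring_scope.

Definition simple_graph (n : nat) (adj : rel 'I_n) : Prop :=
  (forall i j, adj i j = adj j i) /\ (forall i, ~~ adj i i).

Definition lines (n : nat) (adj : rel 'I_n) : {set 'I_n * 'I_n} :=
  [set p | adj p.1 p.2 && (p.1 < p.2)%N].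

(* Radial grid: the underlying graph is a tree (connected, n-1 edges). *)
Definition is_tree (n : nat) (adj : rel 'I_n) : Prop :=
  simple_graph adj /\ (forall i j, connect adj i j) /\ #|lines adj| = n.-1.

Definition rho (n : nat) (adj : rel 'I_n) (i : 'I_n) : nat := #|[set j | adj i j]|.

Definition injected_current (R : rcfType) (n : nat) (adj : rel 'I_n)
  (Y : 'I_n -> 'I_n -> 'M[R[i]]_3) (Ysh : 'I_n -> 'M[R[i]]_3)
  (V : 'I_n -> 'cV[R[i]]_3) (i : 'I_n) : 'cV[R[i]]_3 :=
  \sum_(j | adj i j) Y i j *m (V i - V j) + Ysh i *m V i.

Definition observable (R : rcfType) (n : nat) (adj : rel 'I_n)
  (Y : 'I_n -> 'I_n -> 'M[R[i]]_3) (Ysh : 'I_n -> 'M[R[i]]_3) (M : {set 'I_n}) : Prop :=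
  forall V V' : 'I_n -> 'cV[R[i]]_3,
    (forall i, i \in M -> V i = V' i /\
        injected_current adj Y Ysh V i = injected_current adj Y Ysh V' i) ->
    forall i, V i = V' i.

From HB Require Import structures.
From mathcomp Require Import all_boot all_order all_algebra.
From mathcomp Require Import complex.
Set Implicit Arguments. Unset Strict Implicit. Unset Printing Implicit Defensive.
Import Order.TTheory GRing.Theory Num.Theory.
Local Open Scope ring_scope.

(* At a monitored bus i the measured V_i and I_i fix the weighted sum
   \sum_j Y_ij V_j over the neighbours of i; the monitored neighbours' voltages
   are measured too, so if i has at most one unmonitored neighbour j, then
   Y_ij V_j, hence V_j, is determined.  Conditions (a) and (b), together with
   the fact that in a connected graph on at least two buses every bus has a
   neighbour, make every unmonitored bus the sole unmonitored neighbour of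
   some monitored bus. *)

Lemma connect_neq_exists_succ (T : finType) (e : rel T) (x y : T) :
  connect e x y -> x != y -> exists z, e x z.
Proof.
move=> /connectP[[|z p] /= ex_p ->]; first by rewrite eqxx.
by case/andP: ex_p => exz _; exists z.
Qed.

Lemma ord_exists_neq (n : nat) (i : 'I_n) : (2 <= n)%N -> exists j : 'I_n, j != i.
Proof.
move=> n_ge2; pose j0 : 'I_n := Ordinal (ltnW n_ge2); pose j1 : 'I_n := Ordinal n_ge2.
have [-> | neq_i0] := eqVneq i j0; last by exists j0; rewrite eq_sym.
by exists j1.
Qed.

Lemma connected_rho_gt0 (n : nat) (adj : rel 'I_n) (i : 'I_n) :
  (2 <= n)%N -> (forall x y, connect adj x y) -> (0 < rho adj i)%N.
Proof.
move=> n_ge2 conn; have [j j_neq_i] := ord_exists_neq i n_ge2.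
have [|k adj_ik] := connect_neq_exists_succ (conn i j); first by rewrite eq_sym.
by rewrite card_gt0; apply/set0Pn; exists k; rewrite inE.
Qed.

Definition unmonitored_nbrs (n : nat) (adj : rel 'I_n) (M : {set 'I_n}) (i : 'I_n) :
  {set 'I_n} := [set j | adj i j & j \notin M].

Section Monitoring.

Variables (R : rcfType) (n : nat) (adj : rel 'I_n).
Variables (Y : 'I_n -> 'I_n -> 'M[R[i]]_3) (Ysh : 'I_n -> 'M[R[i]]_3).
Variable M : {set 'I_n}.

Lemma injected_current_diff (V V' : 'I_n -> 'cV[R[i]]_3) (i : 'I_n) :
  V i = V' i ->
  injected_current adj Y Ysh V' i - injected_current adj Y Ysh V i =
  \sum_(k | adj i k) Y i k *m (V k - V' k).
Proof.
move=> eqVi; rewrite /injected_current eqVi opprD addrACA subrr addr0 -sumrB.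
by apply: eq_bigr => k _; rewrite -mulmxBr opprB addrC addrA subrK.
Qed.

Lemma sum_nbrs_unmonitored (V V' : 'I_n -> 'cV[R[i]]_3) (i : 'I_n) :
  {in M, V =1 V'} ->
  \sum_(k | adj i k) Y i k *m (V k - V' k) =
  \sum_(k in unmonitored_nbrs adj M i) Y i k *m (V k - V' k).
Proof.
move=> eqVM; rewrite (bigID (mem M)) /= big1 ?add0r.
  by apply: eq_bigl => k; rewrite inE.
by move=> k /andP[_ kM]; rewrite eqVM // subrr mulmx0.
Qed.

Lemma voltage_at_sole_unmonitored_nbr (V V' : 'I_n -> 'cV[R[i]]_3) (i j : 'I_n) :
  {in M, V =1 V'} -> i \in M ->
  injected_current adj Y Ysh V i = injected_current adj Y Ysh V' i ->
  unmonitored_nbrs adj M i = [set j] -> Y i j \in unitmx -> V j = V' j.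
Proof.
move=> eqVM iM eqIi nbrs_i Yij_unit; apply/eqP; rewrite -subr_eq0.
have := injected_current_diff (eqVM i iM).
rewrite eqIi subrr sum_nbrs_unmonitored // nbrs_i big_set1 => /esym YV0.
by rewrite -(mulKmx Yij_unit (V j - V' j)) YV0 mulmx0.
Qed.

Hypothesis many_nbrs_few_unmonitored :
  forall i, (1 < rho adj i)%N -> (#|unmonitored_nbrs adj M i| <= 1)%N.

Hypothesis unmonitored_leaf_has_monitored_nbr :
  forall i, rho adj i = 1%N -> i \notin M -> exists j, adj i j && (j \in M).

Lemma card_unmonitored_nbrs_le1 (i : 'I_n) : (#|unmonitored_nbrs adj M i| <= 1)%N.
Proof.
have [/many_nbrs_few_unmonitored // | rho_le1] := ltnP 1 (rho adj i).
apply: leq_trans rho_le1; apply/subset_leq_card/subsetP => j.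
by rewrite !inE => /andP[].
Qed.

Lemma unmonitored_has_monitored_nbr (i : 'I_n) :
  (0 < rho adj i)%N -> i \notin M -> exists j, adj i j && (j \in M).
Proof.
move=> rho_gt0 iNM; have [rho_gt1 | rho_le1] := ltnP 1 (rho adj i); last first.
  by apply: unmonitored_leaf_has_monitored_nbr iNM; apply/anti_leq; rewrite rho_le1.
apply/existsP; apply: contraTT (many_nbrs_few_unmonitored rho_gt1).
rewrite negb_exists => /forallP noM; rewrite -ltnNge (leq_trans rho_gt1) //.
apply/subset_leq_card/subsetP => j; rewrite !inE => adj_ij.
by rewrite adj_ij; have := noM j; rewrite adj_ij.
Qed.

End Monitoring.

Theorem lemma1 (R : rcfType) (n : nat) (adj : rel 'I_n)
  (Y : 'I_n -> 'I_n -> 'M[R[i]]_3) (Ysh : 'I_n -> 'M[R[i]]_3) (M : {set 'I_n}) :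
  (2 <= n)%N ->
  is_tree adj ->
  (forall i j, adj i j -> Y i j \in unitmx) ->
  (forall i, (1 < rho adj i)%N ->
     (#|[set j | adj i j & j \notin M]| <= 1)%N) ->
  (forall i, rho adj i = 1%N -> i \notin M ->
     exists j, adj i j && (j \in M)) ->
  observable adj Y Ysh M.
Proof.
move=> n_ge2 [[adj_sym _] [conn _]] Y_unit few_unmonitored leaf_monitored V V' measured k.
have eqVM : {in M, V =1 V'} by move=> i /measured[].
have [kM | kNM] := boolP (k \in M); first exact: eqVM.
have [j /andP[adj_kj jM]] := unmonitored_has_monitored_nbr few_unmonitored
  leaf_monitored (connected_rho_gt0 k n_ge2 conn) kNM.
have adj_jk : adj j k by rewrite adj_sym.
have nbrs_j : unmonitored_nbrs adj M j = [set k].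
  apply/eqP; rewrite eq_sym eqEcard sub1set inE adj_jk kNM cards1.
  exact: card_unmonitored_nbrs_le1 few_unmonitored j.
have [_ eqIj] := measured j jM.
exact: (voltage_at_sole_unmonitored_nbr eqVM jM eqIj nbrs_j (Y_unit j k adj_jk)).
Qed.
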